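(* If $\mathcal L$ is a purely resolving class of left $R$-modules, then every strict $\mathcal L$-atomic module belonging to $\mathcal L$ is strict Mittag-Leffler (i.e. strict $R\text{-Mod}$-atomic).
   Context: $R$ is a ring with $1$; modules are left $R$-modules. A module is purely generated by a class $\mathcal B$ if it is a pure-epimorphic image of a direct sum of modules from $\mathcal B$; $\mathrm{PGen}\,\mathcal B$ is the class of all such modules. A class is purely resolving if it equals $\mathrm{PGen}\,\mathcal B$ for some class $\mathcal B$ of pure-projective modules closed under finite direct sums. pp formulas as usual. For a class $\mathcal X$, $(M,\bar m)$ is an $\mathcal X$-free realization of a pp formula $\phi$ if $\bar m\in\phi(M)$ and for every $X\in\mathcal X$ and $\bar c\in\phi(X)$ there is a homomorphism $M\to X$ sending $\bar m$ to $\bar c$; $M$ is strict $\mathcal X$-atomic if every finite tuple of $M$ is an $\mathcal X$-free realization of some pp formula. Strict Mittag-Leffler = strict $R\text{-Mod}$-atomic (equivalent to Raynaud–Gruson's notion). *)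

(* Left R-modules = lmodType R; homomorphisms = functions f
   with [linear f] (MathComp's notation: forall a, {morph f : u v / a *: u + v}). *)
From HB Require Import structures.
From mathcomp Require Import all_boot all_order all_algebra.
Set Implicit Arguments. Unset Strict Implicit. Unset Printing Implicit Defensive.
Import GRing.Theory.
Local Open Scope ring_scope.

(* A pp formula phi(x_0..x_{n-1}) for left R-modules:
     exists y_0..y_{m-1}, /\_{j<p} ( sum_i cx j i * x_i + sum_k cy j k * y_k = 0 ). *)
Record ppf (R : pzRingType) (n : nat) := PPF {
  ppf_bound : nat;
  ppf_eqs : nat;
  ppf_cx : 'I_ppf_eqs -> 'I_n -> R;
  ppf_cy : 'I_ppf_eqs -> 'I_ppf_bound -> R }.
Arguments ppf_bound {R n} p.
Arguments ppf_eqs {R n} p.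
Arguments ppf_cx {R n} p _ _.
Arguments ppf_cy {R n} p _ _.

Definition pp_sat_in (R : pzRingType) (n : nat) (phi : ppf R n) (M : lmodType R)
  (P : M -> Prop) (x : 'I_n -> M) : Prop :=
  exists y : 'I_(ppf_bound phi) -> M, (forall k, P (y k)) /\
    forall j, \sum_i ppf_cx phi j i *: x i + \sum_k ppf_cy phi j k *: y k = 0.

Definition pp_sat (R : pzRingType) (n : nat) (phi : ppf R n) (M : lmodType R)
  (x : 'I_n -> M) : Prop := pp_sat_in phi (fun _ => True) x.

(* A pure epimorphism: a surjective homomorphism whose kernel K is a pure
   submodule, i.e. phi(K) = K^n \cap phi(N) for every pp formula phi. *)
Definition pure_epi (R : pzRingType) (N M : lmodType R) (g : N -> M) : Prop :=
  linear g /\ (forall m, exists x, g x = m) /\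
  forall (n : nat) (phi : ppf R n) (x : 'I_n -> N),
    (forall i, g (x i) = 0) -> pp_sat phi x ->
    pp_sat_in phi (fun z => g z = 0) x.

Definition pure_projective (R : pzRingType) (P : lmodType R) : Prop :=
  forall (N M : lmodType R) (g : N -> M), pure_epi g ->
  forall f : P -> M, linear f ->
  exists h : P -> N, linear h /\ forall x, g (h x) = f x.

Definition is_direct_sum (R : pzRingType) (I : Type) (B : I -> lmodType R)
  (N : lmodType R) (inj : forall i, B i -> N) : Prop :=
  (forall i, linear (inj i)) /\
  forall (X : lmodType R) (f : forall i, B i -> X), (forall i, linear (f i)) ->
    exists g : N -> X, [/\ linear g, (forall i x, g (inj i x) = f i x) &
      forall g' : N -> X, linear g' -> (forall i x, g' (inj i x) = f i x) ->
        forall z, g' z = g z].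
Arguments is_direct_sum {R I} B N inj.

Definition PGen (R : pzRingType) (B : lmodType R -> Prop) (M : lmodType R) : Prop :=
  exists (I : Type) (Bf : I -> lmodType R) (N : lmodType R)
         (inj : forall i, Bf i -> N),
    (forall i, B (Bf i)) /\ is_direct_sum Bf N inj /\
    exists g : N -> M, pure_epi g.

(* Closed under finite direct sums (binary direct sums; the trivial one-term
   case is automatic): a direct sum of two members is (up to iso) a member. *)
Definition closed_fin_dsum (R : pzRingType) (B : lmodType R -> Prop) : Prop :=
  forall B1 B2 : lmodType R, B B1 -> B B2 ->
  exists (D : lmodType R)
         (inj : forall b : bool, (if b then B1 else B2) -> D),
    B D /\ is_direct_sum (fun b : bool => if b then B1 else B2) D inj.

Definition purely_resolving (R : pzRingType) (L : lmodType R -> Prop) : Prop :=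
  exists B : lmodType R -> Prop,
    [/\ forall P, B P -> pure_projective P, closed_fin_dsum B &
        forall M, L M <-> PGen B M].

Definition free_realization (R : pzRingType) (X : lmodType R -> Prop)
  (M : lmodType R) (n : nat) (m : 'I_n -> M) (phi : ppf R n) : Prop :=
  pp_sat phi m /\
  forall (Y : lmodType R), X Y -> forall c : 'I_n -> Y, pp_sat phi c ->
    exists h : M -> Y, linear h /\ forall i, h (m i) = c i.

Definition strict_atomic (R : pzRingType) (X : lmodType R -> Prop)
  (M : lmodType R) : Prop :=
  forall (n : nat) (m : 'I_n -> M), exists phi : ppf R n, free_realization X m phi.

Definition strict_ML (R : pzRingType) (M : lmodType R) : Prop :=
  strict_atomic (fun _ => True) M.

(* Write L = PGen B with B a class of pure-projective modules, and let
   g : N -> M be a pure epimorphism from a direct sum N of modules of B.  Then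
   N lies in L (it is purely generated by B via the identity) and N is
   pure-projective.  The proof rests on three general facts, developed in turn:
   1. tuples satisfying a pp formula lift along pure epimorphisms, and this
      characterizes them ([pure_epi_lift], [lift_pure_epi]); consequently, if
      N in X is strict Mittag-Leffler and maps purely onto a strict X-atomic
      module M, then M is strict Mittag-Leffler ([strict_ML_pure_image]);
   2. direct sums of pure-projective modules are pure-projective;
   3. pure-projective modules are strict Mittag-Leffler.  For (3) we build, for
      any module P, its pp cover: the module presented (via a general
      construction of presented modules) by one block of generators for every
      pp tuple of P with chosen witnesses, subject to the equations of the
      formula.  The evident map onto P is a pure epimorphism (pp tuples lift
      to their blocks), so a pure-projective P is a retract of its cover; and
      the cover is strict Mittag-Leffler, since a tuple involves finitely many
      blocks whose presentation is an R-Mod-free pp formula. *)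

From mathcomp Require Import all_boot all_order all_algebra.
From HB Require Import structures.
From mathcomp Require Import boolp.
From Stdlib Require Import ClassicalEpsilon.
Set Implicit Arguments. Unset Strict Implicit. Unset Printing Implicit Defensive.
Import GRing.Theory.
Local Open Scope ring_scope.

Section LinearMaps.
Variables (R : pzRingType) (U V : lmodType R) (f : U -> V).
Hypothesis f_lin : linear f.

Lemma lin0 : f 0 = 0.
Proof. by have := f_lin (-1) 0 0; rewrite scaleN1r addNr scaleN1r addNr. Qed.

Lemma linD u v : f (u + v) = f u + f v.
Proof. by have := f_lin 1 u v; rewrite !scale1r. Qed.

Lemma linZ a u : f (a *: u) = a *: f u.
Proof. by have := f_lin a u 0; rewrite !addr0 lin0 addr0. Qed.

Lemma linB u v : f (u - v) = f u - f v.
Proof. by rewrite linD -scaleN1r linZ scaleN1r. Qed.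

Lemma lin_sum (I : Type) (r : seq I) (P : pred I) (F : I -> U) :
  f (\sum_(i <- r | P i) F i) = \sum_(i <- r | P i) f (F i).
Proof.
elim: r => [|x r IH]; first by rewrite !big_nil lin0.
by rewrite !big_cons; case: (P x); rewrite ?linD IH.
Qed.
End LinearMaps.

Lemma lin_comp (R : pzRingType) (U V W : lmodType R) (f : U -> V) (g : V -> W) :
  linear f -> linear g -> linear (g \o f).
Proof. by move=> hf hg a u v /=; rewrite hf hg. Qed.

Definition ppf_eval (R : pzRingType) (n : nat) (phi : ppf R n) (W : lmodType R)
  (x : 'I_n -> W) (w : 'I_(ppf_bound phi) -> W) (j : 'I_(ppf_eqs phi)) : W :=
  \sum_i ppf_cx phi j i *: x i + \sum_k ppf_cy phi j k *: w k.
Arguments ppf_eval {R n} phi {W} x w j.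

Lemma pp_satP (R : pzRingType) (n : nat) (phi : ppf R n) (W : lmodType R)
    (x : 'I_n -> W) :
  pp_sat phi x <-> exists w, forall j, ppf_eval phi x w j = 0.
Proof. by split=> [[w [_ hw]]|[w hw]]; exists w. Qed.

Lemma ppf_evalB (R : pzRingType) (n : nat) (phi : ppf R n) (W : lmodType R)
    (x x' : 'I_n -> W) (w w' : 'I_(ppf_bound phi) -> W) j :
  ppf_eval phi (fun i => x i - x' i) (fun k => w k - w' k) j =
  ppf_eval phi x w j - ppf_eval phi x' w' j.
Proof.
rewrite /ppf_eval opprD addrACA -!sumrB.
by congr (_ + _); apply: eq_bigr => i _; rewrite scalerBr.
Qed.

Lemma ppf_eval0 (R : pzRingType) (n : nat) (phi : ppf R n) (W : lmodType R) j :
  ppf_eval phi (fun _ => 0 : W) (fun _ => 0) j = 0.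
Proof. by rewrite /ppf_eval !big1 ?addr0 // => i _; rewrite scaler0. Qed.

Lemma lin_ppf_eval (R : pzRingType) (U V : lmodType R) (f : U -> V) (n : nat)
    (phi : ppf R n) (x : 'I_n -> U) (w : 'I_(ppf_bound phi) -> U) j :
  linear f -> f (ppf_eval phi x w j) = ppf_eval phi (f \o x) (f \o w) j.
Proof.
move=> hf; rewrite /ppf_eval (linD hf) !(lin_sum hf).
by congr (_ + _); apply: eq_bigr => i _; rewrite (linZ hf).
Qed.

Lemma pp_sat_lin (R : pzRingType) (U V : lmodType R) (f : U -> V) (n : nat)
    (phi : ppf R n) (x : 'I_n -> U) :
  linear f -> pp_sat phi x -> pp_sat phi (f \o x).
Proof.
move=> hf /pp_satP [w hw]; apply/pp_satP; exists (f \o w) => j.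
by rewrite -(lin_ppf_eval _ _ _ hf) hw (lin0 hf).
Qed.

(* The formula [z_j = (j-th equation of phi)(u)] in the variables [z], one per
   equation of [phi]: its solutions are the vectors of equation values. *)
Definition values_ppf (R : pzRingType) (n : nat) (phi : ppf R n) :
    ppf R (ppf_eqs phi) :=
  @PPF R _ (n + ppf_bound phi) (ppf_eqs phi) (fun j j' => (j == j')%:R)
    (fun j v => match split v with
                | inl i => - ppf_cx phi j i | inr k => - ppf_cy phi j k end).

Lemma sum_delta (R : pzRingType) (V : lmodType R) (n : nat) (x : 'I_n -> V) j :
  \sum_i (j == i)%:R *: x i = x j.
Proof.
rewrite (bigD1 j) //= eqxx scale1r big1 ?addr0 // => i hi.
by rewrite eq_sym (negbTE hi) scale0r.
Qed.

Lemma values_ppfE (R : pzRingType) (n : nat) (phi : ppf R n) (W : lmodType R)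
    (z : 'I_(ppf_eqs phi) -> W) (u : 'I_(n + ppf_bound phi) -> W) j :
  ppf_eval (values_ppf phi) z u j =
  z j - ppf_eval phi (fun i => u (lshift _ i)) (fun k => u (rshift n k)) j.
Proof.
rewrite /ppf_eval /= sum_delta big_split_ord /= opprD -!sumrN.
congr (_ + (_ + _)); apply: eq_bigr => i _.
- by rewrite (unsplitK (inl i) : split (lshift _ i) = inl i) scaleNr.
- by rewrite (unsplitK (inr i) : split (rshift n i) = inr i) scaleNr.
Qed.

Definition witness_ppf (R : pzRingType) (n : nat) (phi : ppf R n) :
    ppf R (ppf_bound phi) :=
  @PPF R _ 0 (ppf_eqs phi) (ppf_cy phi) (fun _ _ => 0).

Lemma witness_ppfE (R : pzRingType) (n : nat) (phi : ppf R n) (W : lmodType R)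
    (w : 'I_(ppf_bound phi) -> W) (v : 'I_0 -> W) j :
  ppf_eval (witness_ppf phi) w v j = ppf_eval phi (fun _ => 0) w j.
Proof.
rewrite /ppf_eval /= big_ord0 addr0 [X in _ = X + _]big1 ?add0r // => i _.
exact: scaler0.
Qed.

Lemma values_ppf_sat (R : pzRingType) (n : nat) (phi : ppf R n) (W : lmodType R)
    (x : 'I_n -> W) (w : 'I_(ppf_bound phi) -> W) :
  pp_sat (values_ppf phi) (ppf_eval phi x w).
Proof.
apply/pp_satP; exists (fun v => match split v with inl i => x i | inr k => w k end).
move=> j; rewrite values_ppfE; apply/eqP; rewrite subr_eq0; apply/eqP.
congr (ppf_eval phi _ _ j); apply: funext => i.
- by rewrite (unsplitK (inl i) : split (lshift _ i) = inl i).
- by rewrite (unsplitK (inr i) : split (rshift n i) = inr i).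
Qed.

Definition trivial_ppf (R : pzRingType) : ppf R 1 :=
  @PPF R 1 0 0 (fun _ _ => 0) (fun _ _ => 0).

Lemma trivial_ppf_sat (R : pzRingType) (W : lmodType R) (x : 'I_1 -> W) :
  pp_sat (trivial_ppf R) x.
Proof. by apply/pp_satP; exists (fun _ => 0); case. Qed.

Lemma pure_epi_lift (R : pzRingType) (N M : lmodType R) (g : N -> M) :
  pure_epi g -> forall (n : nat) (phi : ppf R n) (m : 'I_n -> M), pp_sat phi m ->
  exists x : 'I_n -> N, pp_sat phi x /\ forall i, g (x i) = m i.
Proof.
move=> [g_lin [g_surj g_pure]] n phi m /pp_satP [w hw].
have [pre pre_g] := choice _ g_surj.
pose x0 i := pre (m i); pose w0 k := pre (w k).
have val_ker j : g (ppf_eval phi x0 w0 j) = 0.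
  rewrite (lin_ppf_eval _ _ _ g_lin) -[RHS](hw j).
  by congr (ppf_eval phi _ _ j); apply: funext => i /=; rewrite pre_g.
have [u [u_ker hu]] := g_pure _ _ _ val_ker (values_ppf_sat x0 w0).
exists (fun i => x0 i - u (lshift _ i)); split.
- apply/pp_satP; exists (fun k => w0 k - u (rshift n k)) => j.
  by rewrite ppf_evalB -values_ppfE; apply: hu.
- by move=> i; rewrite (linB g_lin) u_ker subr0 pre_g.
Qed.

Lemma lift_pure_epi (R : pzRingType) (N M : lmodType R) (g : N -> M) :
  linear g ->
  (forall (n : nat) (phi : ppf R n) (m : 'I_n -> M), pp_sat phi m ->
     exists x : 'I_n -> N, pp_sat phi x /\ forall i, g (x i) = m i) ->
  pure_epi g.
Proof.
move=> g_lin g_lift; split=> //; split.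
  move=> m; have [x [_ gx]] := g_lift 1 _ (fun _ => m) (trivial_ppf_sat _).
  by exists (x ord0); rewrite gx.
move=> n phi x x_ker /pp_satP [y hy].
have gy_sat : pp_sat (witness_ppf phi) (g \o y).
  apply/pp_satP; exists (fun _ => 0) => j.
  rewrite witness_ppfE -[RHS](lin0 g_lin) -(hy j) (lin_ppf_eval _ _ _ g_lin).
  by congr (ppf_eval phi _ _ j); apply: funext => i /=; rewrite x_ker.
have [t [/pp_satP [v hv] gt]] := g_lift _ _ _ gy_sat.
exists (fun k => y k - t k); split=> [k|j]; first by rewrite (linB g_lin) gt subrr.
have x_sub0 : x = (fun i => x i - 0) by apply: funext => i; rewrite subr0.
change (ppf_eval phi x (fun k => y k - t k) j = 0).
by rewrite {1}x_sub0 ppf_evalB hy -(witness_ppfE _ v) hv subrr.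
Qed.

Lemma id_pure_epi (R : pzRingType) (N : lmodType R) : pure_epi (@id N).
Proof. by apply: lift_pure_epi => // n phi m m_phi; exists m. Qed.

(* A retract of a strict X-atomic module is strict X-atomic: free realizations
   in the big module are transported along the section and the retraction. *)
Lemma strict_atomic_retract (R : pzRingType) (X : lmodType R -> Prop)
    (P D : lmodType R) (s : P -> D) (r : D -> P) :
  linear s -> linear r -> (forall x, r (s x) = x) ->
  strict_atomic X D -> strict_atomic X P.
Proof.
move=> s_lin r_lin rsK D_at n x.
have [psi [sx_psi sx_free]] := D_at n (s \o x).
exists psi; split.
  have -> : x = r \o (s \o x) by apply: funext => i /=; rewrite rsK.
  exact: pp_sat_lin.
move=> Y XY c c_psi; have [k [k_lin kc]] := sx_free Y XY c c_psi.
by exists (k \o s); split; [exact: lin_comp | exact: kc].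
Qed.

(* A tuple of [M] lifts to a tuple of [N] satisfying its
   X-free formula, the X-freeness maps [M] back into [N], and the Mittag-Leffler
   formula of the lifted tuple is then R-Mod-free for the original tuple. *)
Lemma strict_ML_pure_image (R : pzRingType) (X : lmodType R -> Prop)
    (N M : lmodType R) (g : N -> M) :
  pure_epi g -> X N -> strict_ML N -> strict_atomic X M -> strict_ML M.
Proof.
move=> g_pure XN N_ML M_at n m.
have [phi [m_phi m_free]] := M_at n m.
have [x [x_phi gx]] := pure_epi_lift g_pure m_phi.
have [psi [x_psi x_free]] := N_ML n x.
have [h [h_lin hm]] := m_free N XN x x_phi.
exists psi; split.
  have -> : m = g \o x by apply: funext => i /=; rewrite gx.
  exact: pp_sat_lin g_pure.1 x_psi.
move=> Y _ c c_psi; have [k [k_lin kx]] := x_free Y I c c_psi.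
by exists (k \o h); split; [exact: lin_comp | move=> i /=; rewrite hm kx].
Qed.

(* A direct sum of pure-projective modules is pure-projective: lift on each
   summand and glue by the universal property; the glued map is a lift because
   both [g \o G] and [f] solve the same universal problem. *)
Lemma direct_sum_pure_projective (R : pzRingType) (I : Type)
    (B : I -> lmodType R) (N : lmodType R) (inj : forall i, B i -> N) :
  is_direct_sum B N inj -> (forall i, pure_projective (B i)) ->
  pure_projective N.
Proof.
move=> [inj_lin N_univ] B_pp N' M' g g_pure f f_lin.
have lift_i i : exists h : B i -> N', linear h /\ forall x, g (h x) = f (inj i x).
  exact: B_pp _ _ _ g_pure _ (lin_comp (inj_lin i) f_lin).
pose h i := sval (cid (lift_i i)).
have [h_lin h_lift] : (forall i, linear (h i)) /\
    (forall i x, g (h i x) = f (inj i x)).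
  by split=> i; case: (svalP (cid (lift_i i))).
have [G [G_lin G_inj _]] := N_univ N' h h_lin.
have [G0 [_ _ G0_uniq]] :=
  N_univ M' (fun i => f \o inj i) (fun i => lin_comp (inj_lin i) f_lin).
exists G; split=> // z.
have gG : g (G z) = G0 z.
  apply: (G0_uniq (g \o G)); first exact: lin_comp G_lin g_pure.1.
  by move=> i x /=; rewrite G_inj h_lift.
by rewrite gG (G0_uniq f).
Qed.

(* Formal linear combinations of generators of type [T] and their evaluation
   under an assignment of the generators. *)
Definition feval (R : pzRingType) (T : Type) (W : lmodType R) (f : T -> W)
    (l : seq (R * T)) : W :=
  \sum_(ct <- l) ct.1 *: f ct.2.

Section FormalCombinations.
Variables (R : pzRingType) (T : Type) (W : lmodType R) (f : T -> W).

Lemma feval_nil : feval f [::] = 0.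
Proof. by rewrite /feval big_nil. Qed.

Lemma feval_cat l1 l2 : feval f (l1 ++ l2) = feval f l1 + feval f l2.
Proof. by rewrite /feval big_cat. Qed.

Lemma feval_scale (a : R) l :
  feval f [seq (a * ct.1, ct.2) | ct <- l] = a *: feval f l.
Proof.
by rewrite /feval big_map scaler_sumr; apply: eq_bigr => ct _; rewrite scalerA.
Qed.

Lemma feval_eq_in (T' : eqType) (g h : T' -> W) (l : seq (R * T')) :
  (forall ct, ct \in l -> g ct.2 = h ct.2) -> feval g l = feval h l.
Proof. by move=> gh; apply: eq_big_seq => ct /gh ->. Qed.
End FormalCombinations.

(* The module presented by generators [T] subject to the relations encoded by a
   predicate [adm] on assignments (the "admissible" assignments, i.e. those
   satisfying the relations).  Elements are formal combinations up to having
   equal values under every admissible assignment; each class is represented by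
   a canonical member chosen by Hilbert's epsilon. *)
Section Presentation.
Variables (R : pzRingType) (T : Type).
Variable adm : forall W : lmodType R, (T -> W) -> Prop.

Definition fequiv (l1 l2 : seq (R * T)) : Prop :=
  forall (W : lmodType R) (f : T -> W), adm f -> feval f l1 = feval f l2.

Definition canon (l : seq (R * T)) : seq (R * T) :=
  epsilon (inhabits l) (fequiv l).

Lemma canon_equiv l : fequiv l (canon l).
Proof. by apply: (epsilon_spec (inhabits l) (fequiv l)); exists l. Qed.

Lemma canon_eq l1 l2 : fequiv l1 l2 -> canon l1 = canon l2.
Proof.
move=> e12; rewrite /canon (Prop_irrelevance (inhabits l1) (inhabits l2)).
congr epsilon; apply: funext => l; apply: propext.
by split=> e W f hf; rewrite -e // e12.
Qed.

Lemma canonK l : canon (canon l) = canon l.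
Proof. by apply: canon_eq => W f hf; rewrite -canon_equiv. Qed.
End Presentation.

Definition presented (R : pzRingType) (T : Type)
    (adm : forall W : lmodType R, (T -> W) -> Prop) :=
  {l : seq (R * T) | canon adm l = l}.

HB.instance Definition _ R T adm := gen_eqMixin (@presented R T adm).
HB.instance Definition _ R T adm := gen_choiceMixin (@presented R T adm).

Section PresentedZmod.
Variables (R : pzRingType) (T : Type).
Variable adm : forall W : lmodType R, (T -> W) -> Prop.
Local Notation P := (presented adm).

Definition pres_of (l : seq (R * T)) : P := exist _ (canon adm l) (canonK adm l).

Lemma presented_eq (a b : P) :
  (forall (W : lmodType R) (f : T -> W), adm f ->
     feval f (sval a) = feval f (sval b)) ->
  a = b.
Proof.
case: a b => [la ha] [lb hb] /= e; have lab : la = lb.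
  by rewrite -ha -hb; apply: canon_eq.
by subst lb; congr exist; apply: Prop_irrelevance.
Qed.

Lemma feval_pres_of (W : lmodType R) (f : T -> W) l :
  adm f -> feval f (sval (pres_of l)) = feval f l.
Proof. by move=> hf; rewrite -canon_equiv. Qed.

Definition pres_zero : P := pres_of [::].
Definition pres_add (a b : P) : P := pres_of (sval a ++ sval b).
Definition pres_scale (r : R) (a : P) : P :=
  pres_of [seq (r * ct.1, ct.2) | ct <- sval a].
Definition pres_opp (a : P) : P := pres_scale (-1) a.

Section Evaluation.
Variables (W : lmodType R) (f : T -> W).
Hypothesis f_adm : adm f.

Lemma feval_pres_zero : feval f (sval pres_zero) = 0.
Proof. by rewrite feval_pres_of // feval_nil. Qed.

Lemma feval_pres_add a b :
  feval f (sval (pres_add a b)) = feval f (sval a) + feval f (sval b).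
Proof. by rewrite feval_pres_of // feval_cat. Qed.

Lemma feval_pres_scale r a :
  feval f (sval (pres_scale r a)) = r *: feval f (sval a).
Proof. by rewrite feval_pres_of // feval_scale. Qed.

Lemma feval_pres_opp a : feval f (sval (pres_opp a)) = - feval f (sval a).
Proof. by rewrite feval_pres_scale scaleN1r. Qed.
End Evaluation.

Lemma pres_addA : associative pres_add.
Proof.
by move=> a b c; apply: presented_eq => W f hf; rewrite !(feval_pres_add hf) addrA.
Qed.

Lemma pres_addC : commutative pres_add.
Proof.
by move=> a b; apply: presented_eq => W f hf; rewrite !(feval_pres_add hf) addrC.
Qed.

Lemma pres_add0 : left_id pres_zero pres_add.
Proof.
move=> a; apply: presented_eq => W f hf.
by rewrite (feval_pres_add hf) (feval_pres_zero hf) add0r.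
Qed.

Lemma pres_addN : left_inverse pres_zero pres_opp pres_add.
Proof.
move=> a; apply: presented_eq => W f hf.
by rewrite (feval_pres_add hf) (feval_pres_opp hf) (feval_pres_zero hf) addNr.
Qed.
End PresentedZmod.

HB.instance Definition _ R T adm := GRing.isZmodule.Build (@presented R T adm)
  (@pres_addA R T adm) (@pres_addC R T adm) (@pres_add0 R T adm)
  (@pres_addN R T adm).

Section PresentedLmod.
Variables (R : pzRingType) (T : Type).
Variable adm : forall W : lmodType R, (T -> W) -> Prop.
Local Notation P := (presented adm).

Lemma pres_scaleA a b (v : P) :
  pres_scale a (pres_scale b v) = pres_scale (a * b) v.
Proof.
by apply: presented_eq => W f hf; rewrite !(feval_pres_scale hf) scalerA.
Qed.

Lemma pres_scale1 : left_id 1 (@pres_scale R T adm).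
Proof.
by move=> v; apply: presented_eq => W f hf; rewrite (feval_pres_scale hf) scale1r.
Qed.

Lemma pres_scaleDr : right_distributive (@pres_scale R T adm) +%R.
Proof.
move=> a u v; apply: presented_eq => W f hf.
by rewrite !(feval_pres_scale hf, feval_pres_add hf) scalerDr.
Qed.

Lemma pres_scaleDl (v : P) : {morph (@pres_scale R T adm)^~ v : a b / a + b}.
Proof.
move=> a b; apply: presented_eq => W f hf.
by rewrite !(feval_pres_scale hf, feval_pres_add hf) scalerDl.
Qed.
End PresentedLmod.

HB.instance Definition _ R T adm := GRing.Zmodule_isLmodule.Build R
  (@presented R T adm) (@pres_scaleA R T adm) (@pres_scale1 R T adm)
  (@pres_scaleDr R T adm) (@pres_scaleDl R T adm).

Section PresentedUniversal.
Variables (R : pzRingType) (T : Type).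
Variable adm : forall W : lmodType R, (T -> W) -> Prop.
Local Notation P := (presented adm).

Definition pres_gen (t : T) : P := pres_of adm [:: (1, t)].
Definition pres_lift (W : lmodType R) (f : T -> W) (a : P) : W := feval f (sval a).

Lemma pres_lift_linear (W : lmodType R) (f : T -> W) :
  adm f -> linear (pres_lift f).
Proof.
by move=> hf a u v; rewrite /pres_lift (feval_pres_add hf) (feval_pres_scale hf).
Qed.

Lemma pres_lift_gen (W : lmodType R) (f : T -> W) t :
  adm f -> pres_lift f (pres_gen t) = f t.
Proof. by move=> hf; rewrite /pres_lift feval_pres_of // /feval big_seq1 scale1r. Qed.

Lemma pres_lift_feval (W : lmodType R) (f : T -> W) l :
  adm f -> pres_lift f (feval pres_gen l) = feval f l.
Proof.
move=> hf; rewrite /feval (lin_sum (pres_lift_linear hf)).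
by apply: eq_bigr => ct _; rewrite (linZ (pres_lift_linear hf)) pres_lift_gen.
Qed.

Lemma pres_ext (a b : P) :
  (forall (W : lmodType R) (f : T -> W), adm f -> pres_lift f a = pres_lift f b) ->
  a = b.
Proof. exact: presented_eq. Qed.

Lemma pres_decomp (a : P) : feval pres_gen (sval a) = a.
Proof. by apply: pres_ext => W f hf; rewrite pres_lift_feval. Qed.
End PresentedUniversal.

Record block (R : pzRingType) (P : lmodType R) := Block {
  blk_arity : nat;
  blk_phi : ppf R blk_arity;
  blk_args : 'I_blk_arity -> P;
  blk_wit : 'I_(ppf_bound blk_phi) -> P;
  blk_eqs : forall j, ppf_eval blk_phi blk_args blk_wit j = 0 }.
Arguments blk_args {R P} b i.
Arguments blk_wit {R P} b k.

HB.instance Definition _ (R : pzRingType) (P : lmodType R) :=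
  gen_eqMixin (block P).

Definition cover_gen (R : pzRingType) (P : lmodType R) :=
  {b : block P & ('I_(blk_arity b) + 'I_(ppf_bound (blk_phi b)))%type}.

Section PPCover.
Variables (R : pzRingType) (P : lmodType R).
Implicit Types (b : block P) (W : lmodType R).

Definition arg_gen b (i : 'I_(blk_arity b)) : cover_gen P := existT _ b (inl i).
Definition wit_gen b (k : 'I_(ppf_bound (blk_phi b))) : cover_gen P :=
  existT _ b (inr k).

Definition blk_rel W (f : cover_gen P -> W) b (j : 'I_(ppf_eqs (blk_phi b))) : W :=
  ppf_eval (blk_phi b) (fun i => f (arg_gen i)) (fun k => f (wit_gen k)) j.
Arguments blk_rel {W} f b j.

Definition cover_adm W (f : cover_gen P -> W) : Prop := forall b j, blk_rel f b j = 0.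

Definition pp_cover := presented cover_adm.

Local Notation gen := (pres_gen cover_adm).

Definition gen_val (t : cover_gen P) : P :=
  match t with existT b (inl i) => blk_args b i | existT b (inr k) => blk_wit b k end.

Lemma gen_val_adm : cover_adm gen_val.
Proof. by move=> b j; apply: blk_eqs. Qed.

Definition cover_map : pp_cover -> P := pres_lift gen_val.

Lemma cover_map_linear : linear cover_map.
Proof. exact: pres_lift_linear gen_val_adm. Qed.

Lemma gen_rel b j : blk_rel gen b j = 0.
Proof.
apply: pres_ext => W f hf; have f_lin := pres_lift_linear hf.
rewrite /blk_rel (lin_ppf_eval _ _ _ f_lin) (lin0 f_lin) -(hf b j).
by congr ppf_eval; apply: funext => i /=; rewrite pres_lift_gen.
Qed.

(* Every pp tuple of [P] is the image of a pp tuple of the cover: the generators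
   of the block it forms. *)
Lemma cover_lift (n : nat) (phi : ppf R n) (p : 'I_n -> P) :
  pp_sat phi p ->
  exists x : 'I_n -> pp_cover, pp_sat phi x /\ forall i, cover_map (x i) = p i.
Proof.
move=> /pp_satP [w hw]; pose b := Block hw.
exists (fun i => gen (arg_gen (b := b) i)); split.
  apply/pp_satP; exists (fun k => gen (wit_gen (b := b) k)).
  exact: (gen_rel (b := b)).
by move=> i; rewrite /cover_map pres_lift_gen //; apply: gen_val_adm.
Qed.

Lemma cover_map_pure : pure_epi cover_map.
Proof. exact: lift_pure_epi cover_map_linear cover_lift. Qed.
End PPCover.
Arguments blk_rel {R P W} f b j.

(* Finite linear systems over a finite list [S] of generators, written as pp
   formulas whose witnesses are the values of the generators. *)
Section LinearSystem.
Variables (R : pzRingType) (T : eqType) (S : seq T).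

Definition on_seq (W : lmodType R) (y : 'I_(size S) -> W) (t : T) : W :=
  if insub (index t S) is Some v then y v else 0.

Definition coef_at (l : seq (R * T)) (v : nat) : R :=
  \sum_(ct <- l | index ct.2 S == v) ct.1.

Lemma on_seq_in (W : lmodType R) (y : 'I_(size S) -> W) t
    (tS : (index t S < size S)%N) :
  on_seq y t = y (Ordinal tS).
Proof. by rewrite /on_seq insubT /=; congr y; apply: val_inj. Qed.

Lemma on_seq_out (W : lmodType R) (y : 'I_(size S) -> W) t :
  t \notin S -> on_seq y t = 0.
Proof. by move=> t_notS; rewrite /on_seq insubF // index_mem; apply: negbTE. Qed.

Lemma feval_on_seq (W : lmodType R) (y : 'I_(size S) -> W) (l : seq (R * T)) :
  all (fun ct => ct.2 \in S) l ->
  feval (on_seq y) l = \sum_(v < size S) coef_at l v *: y v.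
Proof.
elim: l => [_|[c t] l IH /= /andP [tS lS]].
  by rewrite feval_nil big1 // => v _; rewrite /coef_at big_nil scale0r.
rewrite /feval big_cons -/(feval _ _) IH //=.
rewrite [RHS](eq_bigr (fun v : 'I_(size S) =>
  (if index t S == v then c else 0) *: y v + coef_at l v *: y v)); last first.
  move=> v _; rewrite /coef_at big_cons /=.
  by case: eqP; rewrite ?scalerDl ?scale0r ?add0r.
rewrite big_split /=; congr (_ + _).
have tS_lt : (index t S < size S)%N by rewrite index_mem.
rewrite (bigD1 (Ordinal tS_lt)) //= eqxx (on_seq_in _ tS_lt) big1 ?addr0 // => v vt.
case: eqP => [tv|_]; last exact: scale0r.
by case/eqP: vt; apply: val_inj.
Qed.

Variables (n : nat) (ls : 'I_n -> seq (R * T)) (rs : seq (seq (R * T))).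

(* The formula [exists y, x_i = ls_i(y) for all i, and r(y) = 0 for r in rs]. *)
Definition linsys_ppf : ppf R n :=
  @PPF R n (size S) (n + size rs)
    (fun j i => if split j is inl j' then (j' == i)%:R else 0)
    (fun j v => match split j with
                | inl i => - coef_at (ls i) v
                | inr r => coef_at (nth [::] rs r) v end).

Hypothesis ls_S : forall i, all (fun ct => ct.2 \in S) (ls i).
Hypothesis rs_S : forall r, r \in rs -> all (fun ct => ct.2 \in S) r.

Lemma linsys_ppfE (W : lmodType R) (x : 'I_n -> W) (y : 'I_(size S) -> W) :
  (forall j, ppf_eval linsys_ppf x y j = 0) <->
  (forall i, x i = feval (on_seq y) (ls i)) /\
  (forall r, r \in rs -> feval (on_seq y) r = 0).
Proof.
have eval_ls i : ppf_eval linsys_ppf x y (lshift _ i) = x i - feval (on_seq y) (ls i).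
  rewrite /ppf_eval /= (unsplitK (inl i) : split (lshift _ i) = inl i).
  rewrite sum_delta feval_on_seq // -sumrN.
  by congr (_ + _); apply: eq_bigr => v _; rewrite scaleNr.
have eval_rs (r : 'I_(size rs)) :
    ppf_eval linsys_ppf x y (rshift n r) = feval (on_seq y) (nth [::] rs r).
  rewrite /ppf_eval /= (unsplitK (inr r) : split (rshift n r) = inr r).
  rewrite big1 ?add0r ?feval_on_seq ?rs_S ?mem_nth // => i _.
  exact: scale0r.
split=> [eqs|[xs rs0] j].
  split=> [i|r r_rs]; first by apply/eqP; rewrite -subr_eq0 -eval_ls eqs.
  have r_lt : (index r rs < size rs)%N by rewrite index_mem.
  by have := eqs (rshift n (Ordinal r_lt)); rewrite eval_rs /= nth_index.
case: (split_ordP j) => [i ->|r ->]; first by rewrite eval_ls xs subrr.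
by rewrite eval_rs rs0 // mem_nth.
Qed.
End LinearSystem.

Section Blocks.
Variables (R : pzRingType) (P : lmodType R).
Implicit Type b : block P.

Definition gens_of b : seq (cover_gen P) :=
  [seq arg_gen i | i <- enum 'I_(blk_arity b)] ++
  [seq wit_gen k | k <- enum 'I_(ppf_bound (blk_phi b))].

Definition rel_comb b (j : 'I_(ppf_eqs (blk_phi b))) : seq (R * cover_gen P) :=
  [seq (ppf_cx (blk_phi b) j i, arg_gen i) | i <- enum 'I_(blk_arity b)] ++
  [seq (ppf_cy (blk_phi b) j k, wit_gen k) | k <- enum 'I_(ppf_bound (blk_phi b))].
Arguments rel_comb : clear implicits.

Lemma feval_rel_comb (W : lmodType R) (f : cover_gen P -> W) b j :
  feval f (rel_comb b j) = blk_rel f b j.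
Proof. by rewrite /feval big_cat !big_map -!enumT !big_enum. Qed.

Lemma mem_gens_of (t : cover_gen P) b : (t \in gens_of b) = (projT1 t == b).
Proof.
apply/idP/eqP=> [|<-]; first by rewrite mem_cat => /orP[] /mapP [? _ ->].
case: t => b' [i|k]; rewrite mem_cat; apply/orP.
- by left; apply/mapP; exists i; rewrite ?mem_enum.
- by right; apply/mapP; exists k; rewrite ?mem_enum.
Qed.

Lemma rel_comb_gens b j : all (fun ct => ct.2 \in gens_of b) (rel_comb b j).
Proof.
apply/allP => ct; rewrite mem_cat => /orP[] /mapP [i _ ->] /=;
  by rewrite mem_gens_of.
Qed.

Lemma cover_adm_blocks (W : lmodType R) (f : cover_gen P -> W) (bs : seq (block P)) :
  (forall b j, b \in bs -> feval f (rel_comb b j) = 0) ->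
  (forall t, projT1 t \notin bs -> f t = 0) ->
  cover_adm f.
Proof.
move=> f_rel f_out b j; case: (boolP (b \in bs)) => [bs_b|bs_b].
  by rewrite -feval_rel_comb f_rel.
rewrite /blk_rel -[RHS](@ppf_eval0 _ _ (blk_phi b) W j).
by congr ppf_eval; apply: funext => i; apply: f_out.
Qed.
End Blocks.
Arguments rel_comb {R P} b j.

(* The cover is strict Mittag-Leffler: a tuple [d] of the cover involves only
   finitely many blocks, and the linear system formed by its expression in the
   generators of these blocks together with their relations is an R-Mod-free
   formula for [d]. *)
Section CoverTuple.
Variables (R : pzRingType) (P : lmodType R) (n : nat) (d : 'I_n -> pp_cover P).
Local Notation gen := (pres_gen (@cover_adm R P)).

Let ls (i : 'I_n) : seq (R * cover_gen P) := sval (d i).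
Let blocks : seq (block P) :=
  [seq projT1 ct.2 | ct <- flatten [seq ls i | i <- enum 'I_n]].
Let S : seq (cover_gen P) := flatten [seq gens_of b | b <- blocks].
Let rs : seq (seq (R * cover_gen P)) :=
  flatten [seq [seq rel_comb b j | j <- enum 'I_(ppf_eqs (blk_phi b))] | b <- blocks].

Let mem_S t : (t \in S) = (projT1 t \in blocks).
Proof.
apply/flatten_mapP/idP => [[b b_in]|t_in]; first by rewrite mem_gens_of => /eqP ->.
by exists (projT1 t); rewrite ?mem_gens_of.
Qed.

Let ls_S i : all (fun ct => ct.2 \in S) (ls i).
Proof.
apply/allP => ct ct_in; rewrite mem_S; apply/mapP; exists ct => //.
by apply/flatten_mapP; exists i; rewrite ?mem_enum.
Qed.

Let rsP r : r \in rs -> exists b j, b \in blocks /\ r = rel_comb b j.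
Proof. by case/flatten_mapP => b b_in /mapP [j _ ->]; exists b, j. Qed.

Let rs_S r : r \in rs -> all (fun ct => ct.2 \in S) r.
Proof.
case/rsP => b [j [b_in ->]]; apply/allP => ct /(allP (rel_comb_gens j)).
by rewrite mem_S mem_gens_of => /eqP ->.
Qed.

Let rel_comb_rs b j : b \in blocks -> rel_comb b j \in rs.
Proof.
move=> b_in; apply/flatten_mapP; exists b => //.
by apply/mapP; exists j; rewrite ?mem_enum.
Qed.

Let psi : ppf R n := linsys_ppf S ls rs.

(* The generators themselves witness [psi] at [d]. *)
Let d_psi : pp_sat psi d.
Proof.
pose y v := gen (tnth (in_tuple S) v).
have y_S l : all (fun ct => ct.2 \in S) l -> feval (on_seq y) l = feval gen l.
  move=> lS; apply: feval_eq_in => ct /(allP lS) ct_S.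
  have ct_lt : (index ct.2 S < size S)%N by rewrite index_mem.
  by rewrite (on_seq_in _ ct_lt) /y (tnth_nth ct.2) /= nth_index.
apply/pp_satP; exists y; apply/linsys_ppfE => //; split=> [i|r r_rs].
  by rewrite y_S // pres_decomp.
have [b [j [b_in ->]]] := rsP r_rs.
by rewrite y_S ?rs_S ?rel_comb_rs // feval_rel_comb gen_rel.
Qed.

Let psi_free (Y : lmodType R) (c : 'I_n -> Y) :
  pp_sat psi c -> exists h : pp_cover P -> Y, linear h /\ forall i, h (d i) = c i.
Proof.
case/pp_satP => y /(linsys_ppfE ls_S rs_S) [c_ls rs0].
have f_adm : cover_adm (on_seq y).
  apply: (cover_adm_blocks (bs := blocks)) => [b j b_in|t t_out].
    by apply: rs0; apply: rel_comb_rs.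
  by apply: on_seq_out; rewrite mem_S.
exists (pres_lift (on_seq y)); split; first exact: pres_lift_linear.
by move=> i; rewrite c_ls.
Qed.

Lemma cover_tuple_free : exists psi : ppf R n, free_realization (fun _ => True) d psi.
Proof. by exists psi; split=> [|Y _]; [exact: d_psi | apply: psi_free]. Qed.
End CoverTuple.

Lemma cover_strict_ML (R : pzRingType) (P : lmodType R) : strict_ML (pp_cover P).
Proof. by move=> n d; apply: cover_tuple_free. Qed.

(* Pure-projective modules are strict Mittag-Leffler: a section of the pure
   epimorphism from the pp cover exhibits them as retracts of the cover. *)
Lemma pure_projective_strict_ML (R : pzRingType) (P : lmodType R) :
  pure_projective P -> strict_ML P.
Proof.
move=> P_pp.
have [s [s_lin cover_s]] := P_pp _ _ _ (cover_map_pure P) id (fun _ _ _ => erefl).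
apply: (strict_atomic_retract s_lin (@cover_map_linear _ P) cover_s).
exact: cover_strict_ML.
Qed.

Theorem corollary3p4 (R : pzRingType) (L : lmodType R -> Prop)
  (hL : purely_resolving L) (M : lmodType R)
  (hML : L M) (hat : strict_atomic L M) :
  strict_ML M.
Proof.
have [B [B_pp _ L_PGen]] := hL.
have [I [Bf [N [inj [B_Bf [N_sum [g g_pure]]]]]]] := (L_PGen M).1 hML.
(* N is purely generated by B through the identity, hence lies in L *)
have N_L : L N.
  apply/L_PGen; exists I, Bf, N, inj; split=> //; split=> //.
  by exists id; apply: id_pure_epi.
have N_ML : strict_ML N.
  apply: pure_projective_strict_ML.
  by apply: (direct_sum_pure_projective N_sum) => i; apply: B_pp.
exact: strict_ML_pure_image g_pure N_L N_ML hat.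
Qed.
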